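(* For every integer $n\ge 2$, \[ \left\lfloor\frac{n+2\left\lfloor\frac{n-3}{7}\right\rfloor}{3}\right\rfloor\le S_d(n)\le \left\lfloor\frac{n}{2}\right\rfloor . \]
   Context: A word is a finite word over the two-letter alphabet $\{a,b\}$; words are written multiplicatively (e.g. $b^{3}(ab)^2$), and $l(w)$ denotes the length of $w$. A word $w=a_1\cdots a_n$ is a palindrome if $a_i=a_{n-i+1}$ for all $i\le n$, and an antipalindrome if $a_i\neq a_{n-i+1}$ for all $i\le n$. For a word $w$, $S_d(w)$ is the minimal number of letters of $w$ whose deletion from $w$ yields a palindrome or an antipalindrome. For a positive integer $n$, $S_d(n)=\max\{S_d(w): w \text{ a word with } l(w)=n\}$. Here $\lfloor x\rfloor$ denotes the integer part (floor) of $x$. *)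

From mathcomp Require Import all_boot.
Set Implicit Arguments. Unset Strict Implicit. Unset Printing Implicit Defensive.

(* Words over {a,b} encoded as bitseq: a = false, b = true. *)
Definition palindrome (w : bitseq) : bool := rev w == w.
Definition antipalindrome (w : bitseq) : bool := rev w == map negb w.

Definition Sd_word (w : bitseq) : nat :=
  \big[minn/size w]_(m : (size w).-tuple bool
        | palindrome (mask m w) || antipalindrome (mask m w))
     (size w - size (mask m w)).

Definition Sd (n : nat) : nat :=
  \max_(w : n.-tuple bool) Sd_word w.

From mathcomp Require Import all_boot all_order zify.
Set Implicit Arguments. Unset Strict Implicit. Unset Printing Implicit Defensive.
Import Order.TTheory.

(* Upper bound: keeping every occurrence of the more frequent letter leaves a
   constant word, a palindrome, at the cost of at most [n/2] deletions.

   Lower bound: with m = [(n-3)/7] and T = [(n+2m)/3], the word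
   a^(T-m) b^(n-T-2m) (ab)^m b^m of length n has no palindromic or
   antipalindromic subsequence longer than n - T.  A palindromic
   (antipalindromic) subsequence of a word either misses its first letter,
   or misses its last letter, or uses both; then these two letters are equal
   (different) and the rest is a palindromic (antipalindromic) subsequence of
   the word with both ends removed.  Block words a^p b^q (ab)^t a^e b^r with
   e <= 1 and e r = 0 are closed under removing either end, so a function of
   (p, q, t, e, r) that never increases when an end is removed and drops by 2
   when two equal (different) ends are removed bounds these lengths; for
   explicit such functions these inequalities reduce to a case analysis on
   small values of the parameters. *)

Definition blocks := (nat * nat * nat * nat * nat)%type.

Definition block_word (B : blocks) : bitseq := let: (p, q, t, e, r) := B in
  nseq p false ++ nseq q true ++ flatten (nseq t [:: false; true])
    ++ nseq e false ++ nseq r true.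

Definition block_size (B : blocks) : nat :=
  let: (p, q, t, e, r) := B in p + q + 2 * t + e + r.

Definition admissible (B : blocks) : Prop :=
  let: (p, q, t, e, r) := B in e <= 1 /\ (e = 0 \/ r = 0).

Definition head_letter (B : blocks) : bool := let: (p, q, t, e, r) := B in
  match p, q, t, e with
  | _.+1, _, _, _ => false
  | 0, _.+1, _, _ => true
  | 0, 0, _.+1, _ => false
  | 0, 0, 0, _.+1 => false
  | 0, 0, 0, 0 => true
  end.

Definition last_letter (B : blocks) : bool := let: (p, q, t, e, r) := B in
  match r, e, t, q with
  | _.+1, _, _, _ => true
  | 0, _.+1, _, _ => false
  | 0, 0, _.+1, _ => true
  | 0, 0, 0, _.+1 => true
  | 0, 0, 0, 0 => false
  end.

Definition blocks_behead (B : blocks) : blocks := let: (p, q, t, e, r) := B in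
  match p, q, t, e with
  | p'.+1, _, _, _ => (p', q, t, e, r)
  | 0, q'.+1, _, _ => (0, q', t, e, r)
  | 0, 0, t'.+1, _ => (0, 1, t', e, r)
  | 0, 0, 0, e'.+1 => (0, 0, 0, e', r)
  | 0, 0, 0, 0 => (0, 0, 0, 0, r.-1)
  end.

Definition blocks_belast (B : blocks) : blocks := let: (p, q, t, e, r) := B in
  match r, e, t, q with
  | r'.+1, _, _, _ => (p, q, t, e, r')
  | 0, e'.+1, _, _ => (p, q, t, e', 0)
  | 0, 0, t'.+1, _ => (p, q, t', 1, 0)
  | 0, 0, 0, q'.+1 => (p, q', 0, 0, 0)
  | 0, 0, 0, 0 => (p.-1, 0, 0, 0, 0)
  end.

Ltac blocks_cases B := case: B => [[[[[|?] [|?]] [|?]] [|?]] [|?]].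

Lemma size_block_word B : size (block_word B) = block_size B.
Proof.
case: B => [[[[p q] t] e] r] /=; rewrite !size_cat !size_nseq size_flatten.
suff -> : sumn (shape (nseq t [:: false; true])) = 2 * t by rewrite !addnA.
by elim: t => //= t ->; rewrite mulnS.
Qed.

Lemma block_size_behead B : block_size (blocks_behead B) = (block_size B).-1.
Proof. blocks_cases B => /=; lia. Qed.

Lemma block_size_belast B : block_size (blocks_belast B) = (block_size B).-1.
Proof. blocks_cases B => /=; lia. Qed.

Lemma admissible_behead B : admissible B -> admissible (blocks_behead B).
Proof. blocks_cases B => /=; lia. Qed.

Lemma admissible_belast B : admissible B -> admissible (blocks_belast B).
Proof. blocks_cases B => /=; lia. Qed.

Lemma block_word_behead B : 0 < block_size B ->
  block_word B = head_letter B :: block_word (blocks_behead B).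
Proof. by blocks_cases B. Qed.

Lemma block_word_belast B : 0 < block_size B ->
  block_word B = rcons (block_word (blocks_belast B)) (last_letter B).
Proof.
have nseqSr (T : Type) n (x : T) : nseq n.+1 x = nseq n x ++ [:: x].
  by rewrite -addn1 nseqD.
rewrite -cats1; blocks_cases B => // _; cbn [block_word blocks_belast last_letter].
all: by rewrite !nseqSr ?flatten_cat /= -?catA ?cats0.
Qed.

Lemma block_word_trim B : 1 < block_size B ->
  let M := block_word (blocks_belast (blocks_behead B)) in
  [/\ block_word B = head_letter B :: rcons M (last_letter B),
      block_word (blocks_behead B) = rcons M (last_letter B)
    & block_word (blocks_belast B) = head_letter B :: M].
Proof.
move=> B2 M; have B1 : 0 < block_size B by lia.
have wbh : block_word (blocks_behead B) = rcons M (last_letter (blocks_behead B)).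
  by apply: block_word_belast; rewrite block_size_behead; lia.
have := block_word_belast B1; rewrite (block_word_behead B1) wbh -rcons_cons.
by move/rcons_inj=> [<- <-].
Qed.

(* Bounds on the longest palindromic, resp. antipalindromic, subsequence of
   [block_word B]; all that matters is that they satisfy the peeling
   inequalities proved below. *)
Definition pal_potential (B : blocks) : nat := let: (p, q, t, e, r) := B in
  maxn (maxn (q + t + r) (p + t + e))
   (maxn (if (0 < p) && (0 < t + e) then minn (q + t + e + p) (q + 2 * t + 2 * e) else 0)
     (maxn (if e == 0 then minn (2 * t + 2 * q - 1) (2 * t + 2 * r + 1) else 2 * t + 1)
           (if [&& e == 1, 0 < p & 0 < q] then 2 * t + 3 else 0))).

Definition anti_potential (B : blocks) : nat := let: (p, q, t, e, r) := B in
  maxn (maxn (minn (2 * t + 2 * p) (2 * t + 2 * r)) (minn (2 * p) (2 * q + 2 * t + 2 * r)))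
   (maxn (2 * t)
     (maxn (if (0 < p) && (0 < q) then minn (2 * t + 2 * p) (2 * t + 2 + 2 * r) else 0)
           (if e == 1 then minn (2 * t + 2 * q) (2 * t + 2) else 0))).

Ltac solve_bool_arith := match goal with
  | |- is_true (_ || _) => apply/orP; first [left; solve_bool_arith | right; solve_bool_arith]
  | |- is_true (_ && _) => apply/andP; split; solve_bool_arith
  | _ => first [done | lia]
  end.

Ltac solve_potential_ineq :=
  intros; try discriminate; rewrite /pal_potential /anti_potential /=;
  repeat (case: ifP => ?); rewrite ?geq_max; repeat (apply/andP; split);
  rewrite ?leq_max ?geq_min ?leq_min; solve_bool_arith.

Ltac blocks_cases2 B := case: B => [[[[[|[|?]] [|[|?]]] [|[|?]]] [|[|?]]] [|[|?]]].

Lemma pal_potential_gt0 B : admissible B -> 0 < block_size B -> 0 < pal_potential B.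
Proof. blocks_cases B => /=; solve_potential_ineq. Qed.

Lemma pal_potential_behead B : admissible B -> 0 < block_size B ->
  pal_potential (blocks_behead B) <= pal_potential B.
Proof. blocks_cases B => /=; solve_potential_ineq. Qed.

Lemma pal_potential_belast B : admissible B -> 0 < block_size B ->
  pal_potential (blocks_belast B) <= pal_potential B.
Proof. blocks_cases B => /=; solve_potential_ineq. Qed.

Lemma anti_potential_behead B : admissible B -> 0 < block_size B ->
  anti_potential (blocks_behead B) <= anti_potential B.
Proof. blocks_cases B => /=; solve_potential_ineq. Qed.

Lemma anti_potential_belast B : admissible B -> 0 < block_size B ->
  anti_potential (blocks_belast B) <= anti_potential B.
Proof. blocks_cases B => /=; solve_potential_ineq. Qed.

Lemma pal_potential_trim B : admissible B -> 1 < block_size B ->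
  head_letter B = last_letter B ->
  (pal_potential (blocks_belast (blocks_behead B))).+2 <= pal_potential B.
Proof. blocks_cases2 B => /=; solve_potential_ineq. Qed.

Lemma anti_potential_trim B : admissible B -> 1 < block_size B ->
  head_letter B = ~~ last_letter B ->
  (anti_potential (blocks_belast (blocks_behead B))).+2 <= anti_potential B.
Proof. blocks_cases2 B => /=; solve_potential_ineq. Qed.

Lemma subseq_cons_rcons (T : eqType) (x y : T) (s u : seq T) :
  subseq u (x :: rcons s y) ->
  [\/ subseq u (rcons s y), subseq u (x :: s)
    | exists2 v, u = x :: rcons v y & subseq v s].
Proof.
case: u => [|z u] /=; first by move=> _; constructor 1; rewrite sub0seq.
have [->{z} sub_u|_ sub_u] := eqVneq z x; last by constructor 1.
case/lastP: u sub_u => [|v z] sub_u; first by constructor 2; rewrite sub0seq.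
move: sub_u; rewrite -subseq_rev !rev_rcons /=.
have [->{z} sub_v|_ sub_v] := eqVneq z y.
  by constructor 3; exists v; rewrite // -subseq_rev.
by constructor 2; rewrite -subseq_rev rev_rcons.
Qed.

Lemma palindrome_cons_rcons x y v :
  palindrome (x :: rcons v y) -> palindrome v /\ x == y.
Proof.
rewrite /palindrome rev_cons rev_rcons rcons_cons => /eqP [-> /rcons_inj [rev_v]].
by rewrite rev_v !eqxx.
Qed.

Lemma antipalindrome_cons_rcons x y v :
  antipalindrome (x :: rcons v y) -> antipalindrome v /\ x == ~~ y.
Proof.
rewrite /antipalindrome rev_cons rev_rcons /= map_rcons => /eqP [-> /rcons_inj [rev_v <-]].
by rewrite rev_v !eqxx.
Qed.

Section Peeling.

Variables (pr : pred bitseq) (ends : rel bool) (F : blocks -> nat).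

Hypothesis pr_cons_rcons : forall x y v, pr (x :: rcons v y) -> pr v /\ ends x y.
(* Stated for letters that satisfy [pr]: no one-letter word is an
   antipalindrome, and [anti_potential] vanishes on some one-letter words. *)
Hypothesis F_singleton : forall B x,
  admissible B -> 0 < block_size B -> pr [:: x] -> 0 < F B.
Hypothesis F_behead : forall B,
  admissible B -> 0 < block_size B -> F (blocks_behead B) <= F B.
Hypothesis F_belast : forall B,
  admissible B -> 0 < block_size B -> F (blocks_belast B) <= F B.
Hypothesis F_trim : forall B, admissible B -> 1 < block_size B ->
  ends (head_letter B) (last_letter B) -> (F (blocks_belast (blocks_behead B))).+2 <= F B.

Lemma subseq_block_word_size_le B u :
  admissible B -> subseq u (block_word B) -> pr u -> size u <= F B.
Proof.
have [N] := ubnP (block_size B); elim: N B u => // N IH B u ltBN okB sub_u pr_u.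
have [B_le1|B_gt1] := leqP (block_size B) 1.
  have := size_subseq sub_u; rewrite size_block_word.
  case: u {sub_u} pr_u => [|x [|y u]] //= pr_x le1B; last by lia.
  exact: F_singleton pr_x.
have B_gt0 : 0 < block_size B by lia.
have [wB wbh wbl] := block_word_trim B_gt1.
move: sub_u pr_u; rewrite wB => /subseq_cons_rcons[sub_u|sub_u|[v -> sub_v]] pr_u.
- apply: leq_trans (F_behead okB B_gt0); apply: IH (admissible_behead okB) _ pr_u.
    by rewrite block_size_behead; lia.
  by rewrite wbh.
- apply: leq_trans (F_belast okB B_gt0); apply: IH (admissible_belast okB) _ pr_u.
    by rewrite block_size_belast; lia.
  by rewrite wbl.
- have [pr_v ends_B] := pr_cons_rcons pr_u.
  apply: leq_trans (F_trim okB B_gt1 ends_B); rewrite /= size_rcons !ltnS.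
  apply: IH (admissible_belast (admissible_behead okB)) sub_v pr_v.
  by rewrite block_size_belast block_size_behead; lia.
Qed.

End Peeling.

Lemma pal_or_anti_subseq_block_word B u : admissible B ->
  subseq u (block_word B) -> palindrome u || antipalindrome u ->
  size u <= maxn (pal_potential B) (anti_potential B).
Proof.
move=> okB sub_u /orP[pal_u|anti_u]; rewrite leq_max.
  apply/orP; left; apply: (subseq_block_word_size_le (ends := eq_op)) pal_u => //.
  - exact: palindrome_cons_rcons.
  - by move=> B' _ okB' B'_gt0 _; apply: pal_potential_gt0.
  - exact: pal_potential_behead.
  - exact: pal_potential_belast.
  - by move=> B' okB' B'_gt1 /eqP; apply: pal_potential_trim.
apply/orP; right; apply: (subseq_block_word_size_le (ends := fun x y => x == ~~ y)) anti_u => //.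
- exact: antipalindrome_cons_rcons.
- by move=> B' [].
- exact: anti_potential_behead.
- exact: anti_potential_belast.
- by move=> B' okB' B'_gt1 /eqP; apply: anti_potential_trim.
Qed.

Lemma Sd_word_ge w k :
  (forall u, subseq u w -> palindrome u || antipalindrome u -> k <= size w - size u) ->
  k <= Sd_word w.
Proof.
move=> le_k; rewrite /Sd_word -minEnat; apply: (@le_bigmin _ nat) => [|m pal_m].
  by have := le_k [::]; rewrite subn0; apply; rewrite ?sub0seq.
exact: le_k (mask_subseq m w) pal_m.
Qed.

Lemma Sd_word_le w (m : (size w).-tuple bool) :
  palindrome (mask m w) || antipalindrome (mask m w) -> Sd_word w <= size w - size (mask m w).
Proof. by move=> pal_m; rewrite /Sd_word -minEnat; apply: (@bigmin_le_cond _ nat). Qed.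

Lemma Sd_word_le_half w : Sd_word w <= size w %/ 2.
Proof.
pose c := count_mem false w <= count_mem true w.
have count_c : count_mem c w + count_mem (~~ c) w = size w.
  by rewrite -(count_predC (pred1 c)); congr (_ + _); apply: eq_count; case: c; case.
have major_c : count_mem (~~ c) w <= count_mem c w.
  by rewrite /c; case: (leqP (count_mem false w)) => /=; lia.
pose m := map_tuple (pred1 c) (in_tuple w).
have mask_m : mask m w = filter (pred1 c) w by rewrite filter_mask.
have pal_m : palindrome (mask m w).
  by rewrite mask_m /palindrome (all_pred1P _ _ (filter_all _ _)) rev_nseq.
apply: leq_trans (Sd_word_le (m := m) _) _; first by rewrite pal_m.
rewrite mask_m size_filter; move: count_c major_c.
by move: (count_mem c w) (count_mem (~~ c) w) => ??; lia.
Qed.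

Lemma Sd_le_half n : Sd n <= n %/ 2.
Proof.
by apply/bigmax_leqP => w _; have := Sd_word_le_half w; rewrite size_tuple.
Qed.

Lemma Sd_ge_block_word B : admissible B ->
  block_size B - maxn (pal_potential B) (anti_potential B) <= Sd (block_size B).
Proof.
move=> okB; have size_wB : size (block_word B) == block_size B by rewrite size_block_word.
apply: leq_trans (leq_bigmax (Tuple size_wB)); apply: Sd_word_ge => u sub_u pal_u /=.
by rewrite size_block_word leq_sub2l // pal_or_anti_subseq_block_word.
Qed.

Lemma potentials_witness p q m : m < p -> 2 * m + 2 <= q -> 2 * p <= q + 2 * m ->
  maxn (pal_potential (p, q, m, 0, m)) (anti_potential (p, q, m, 0, m)) <= q + 2 * m.
Proof.
move=> *; rewrite /= !geq_max; repeat (case: ifP => ?); rewrite /= ?leq0n ?andbT; lia.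
Qed.

Theorem theorem1 (n : nat) (hn : 2 <= n) :
  (n + 2 * ((n - 3) %/ 7)) %/ 3 <= Sd n <= n %/ 2.
Proof.
rewrite Sd_le_half andbT.
have [n_le2|n_gt2] := leqP n 2; first by have -> : n = 2 by lia.
set m := (n - 3) %/ 7; set T := (n + 2 * m) %/ 3.
have m_bounds : 7 * m <= n - 3 < 7 * m + 7 by rewrite /m; lia.
have T_bounds : 3 * T <= n + 2 * m < 3 * T + 3 by rewrite /T; lia.
clearbody m T.
pose B : blocks := (T - m, n - T - 2 * m, m, 0, m).
have size_B : block_size B = n by rewrite /=; lia.
have okB : admissible B by rewrite /=; lia.
have max_le : maxn (pal_potential B) (anti_potential B) <= n - T.
  by apply: leq_trans (@potentials_witness (T - m) (n - T - 2 * m) m _ _ _) _; lia.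
by have := Sd_ge_block_word okB; rewrite size_B; lia.
Qed.
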